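(* Let $m,s$ be positive integers and $t,r$ integers with $r^s\equiv 1\pmod m$ and $m\mid t(r-1)$, and let $G=\langle a,b\mid a^m=1,\ b^s=a^t,\ b^{-1}ab=a^r\rangle$. If $(m,r-1)\mid t$, then $G$ is the active sum of the family consisting of $\langle a\rangle$, $\langle b\rangle$ and all their conjugates in $G$.
   Context: $(x,y)$ denotes the greatest common divisor (with $(m,0)=m$). Such a group is finite metacyclic with $a$ of order $m$. For a group $G$ and a family $\mathcal{F}$ of distinct subgroups that generates $G$ and is closed under conjugation, the active sum $S$ of $\mathcal{F}$ is the free product of the members of $\mathcal{F}$ divided by the normal subgroup generated by all elements $h^{-1}\cdot g\cdot h\cdot (g^h)^{-1}$ with $h\in F_1$, $g\in F_2$, $F_1,F_2\in\mathcal{F}$, where $g^h=h^{-1}gh$ is regarded as an element of the factor $h^{-1}F_2h\in\mathcal{F}$. The inclusions induce a canonical surjection $\varphi:S\to G$, and ''$G$ is the active sum of $\mathcal{F}$'' means $\varphi$ is an isomorphism. *)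

From mathcomp Require Import all_boot all_order all_algebra all_fingroup.
Set Implicit Arguments. Unset Strict Implicit. Unset Printing Implicit Defensive.
Local Open Scope group_scope.

Definition expgz (gT : finGroupType) (x : gT) (z : int) : gT :=
  match z with Posz n => x ^+ n | Negz n => x ^- n.+1 end.

Section ActiveSum.
Variable gT : finGroupType.

(* A letter of the free product of the members of a family: a pair (F, g)
   standing for the element g of the factor F. *)
Definition letter := ({group gT} * gT)%type.

Definition wf_letter (Fam : {set {group gT}}) (l : letter) : bool :=
  (l.1 \in Fam) && (l.2 \in l.1).

Definition eval_word (w : seq letter) : gT := \prod_(l <- w) l.2.

(* The congruence on words whose quotient is the active sum S: the free
   product of the members of Fam (monoid presentation: (F,1) = empty word,
   (F,x)(F,y) = (F,xy)), divided by the relations h^-1 . g . h = g^h where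
   g^h lives in the factor F2 :^ h. *)
Inductive as_rel (Fam : {set {group gT}}) : seq letter -> seq letter -> Prop :=
| asr_refl w : as_rel Fam w w
| asr_sym w1 w2 : as_rel Fam w1 w2 -> as_rel Fam w2 w1
| asr_trans w1 w2 w3 : as_rel Fam w1 w2 -> as_rel Fam w2 w3 -> as_rel Fam w1 w3
| asr_cat w1 w2 v1 v2 : as_rel Fam w1 w2 -> as_rel Fam v1 v2 ->
    as_rel Fam (w1 ++ v1) (w2 ++ v2)
| asr_one (F : {group gT}) : F \in Fam -> as_rel Fam [:: (F, 1)] [::]
| asr_mul (F : {group gT}) x y : F \in Fam -> x \in F -> y \in F ->
    as_rel Fam [:: (F, x); (F, y)] [:: (F, x * y)]
| asr_conj (F1 F2 : {group gT}) h g : F1 \in Fam -> F2 \in Fam ->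
    h \in F1 -> g \in F2 ->
    as_rel Fam [:: (F1, h^-1); (F2, g); (F1, h)] [:: ((F2 :^ h)%G, g ^ h)].

(* G is the active sum of Fam: Fam is a family of subgroups of G generating G,
   closed under conjugation in G, and the canonical surjection S -> G is
   injective (any two well-formed words with equal values in G are equal
   in S). *)
Definition active_sum (G : {group gT}) (Fam : {set {group gT}}) : Prop :=
  [/\ forall F : {group gT}, F \in Fam -> F \subset G,
      G :=: <<\bigcup_(F in Fam) F>>,
      forall (F : {group gT}) x, F \in Fam -> x \in G -> (F :^ x)%G \in Fam &
      forall w1 w2 : seq letter, all (wf_letter Fam) w1 -> all (wf_letter Fam) w2 ->
        eval_word w1 = eval_word w2 -> as_rel Fam w1 w2].
End ActiveSum.

From mathcomp Require Import all_boot all_order all_algebra all_fingroup cyclic.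
From mathcomp Require Import ring.
Import GRing.Theory.
Set Implicit Arguments. Unset Strict Implicit. Unset Printing Implicit Defensive.
Local Open Scope group_scope.

(* Every member of the family is a conjugate of A = <a> or B = <b> by a product of
   generators, so by the conjugation relations every word of the active sum is
   equivalent to a word in letters from A and B.  Since B normalises A, such a word
   can be pushed to the form (A, x) (B, b^j) with j < s, provided the letter
   (B, b^s) may be replaced by (A, b^s).  That is the role of gcd(m, r-1) | t: it
   makes b^s = a^t a commutator [b, x0] with x0 in A, and both letters (B, [b, x0])
   and (A, [b, x0]) arise from rewriting the conjugate of (B, b) by (A, x0).
   Finally two normal forms with the same value coincide, because b has order s
   modulo A, as the morphism G -> Z_s given by the presentation shows. *)

Lemma abs_modz (z : int) (m : nat) : (0 < m)%N -> ((absz (z %% m))%:Z = z %% m)%Z.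
Proof. by move=> m_gt0; rewrite gez0_abs // modz_ge0 // lt0n_neq0. Qed.

Lemma linear_congruence_solvable (m : nat) (r t : int) :
  (gcdz m%:Z (r - 1)%R %| t)%Z -> exists k, ((1 - r) * k == t %[mod m])%Z.
Proof.
case/dvdzP=> e ->; have [u [v def_g]] := Bezoutz m%:Z (r - 1)%R.
exists (- (v * e))%R; rewrite -def_g.
have -> : ((1 - r) * - (v * e) = - (e * u) * m + e * (u * m + v * (r - 1)))%R by ring.
by rewrite modzMDl mulrC.
Qed.

Section IntPowers.
Variable gT : finGroupType.
Implicit Types (x y : gT) (z : int).

Lemma expgz_modn x (m n : nat) z : x ^+ m = 1 ->
  (n%:Z == z %[mod m])%Z -> expgz x z = x ^+ n.
Proof.
move=> xm; case: z => [k | k] /=.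
  by rewrite !modz_nat => /eqP[e]; rewrite -(expg_mod k xm) -e expg_mod.
rewrite eqz_mod_dvd NegzE opprK -PoszD => /dvdnP[q def_q].
apply/eqP; rewrite eq_invg_mul -expgD addnC -(absz_nat (n + k.+1)) def_q.
by rewrite mulnC expgM xm expg1n.
Qed.

Lemma expgz_mod x (m : nat) z : (0 < m)%N -> x ^+ m = 1 ->
  expgz x z = x ^+ absz (z %% m)%Z.
Proof. by move=> m_gt0 xm; apply: expgz_modn xm _; rewrite abs_modz // modz_mod. Qed.

Lemma expgz_eq_mod x (m : nat) z1 z2 : (0 < m)%N -> x ^+ m = 1 ->
  (z1 == z2 %[mod m])%Z -> expgz x z1 = expgz x z2.
Proof. by move=> m_gt0 xm /eqP eq_z; rewrite !(expgz_mod _ m_gt0 xm) eq_z. Qed.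

Lemma expgzD x z1 z2 : expgz x (z1 + z2) = expgz x z1 * expgz x z2.
Proof.
have [o_gt0 xo] := (order_gt0 x, expg_order x).
rewrite (expgz_mod z1 o_gt0 xo) (expgz_mod z2 o_gt0 xo) -expgD.
by apply: expgz_modn xo _; rewrite PoszD !abs_modz // modzDm.
Qed.

Lemma expgzN x z : expgz x (- z) = (expgz x z)^-1.
Proof. by apply/eqP; rewrite eq_mulgV1 invgK -expgzD addNr. Qed.

Lemma expgzM x z1 z2 : expgz x (z1 * z2) = expgz (expgz x z1) z2.
Proof.
have [o_gt0 xo] := (order_gt0 x, expg_order x).
have xno : (x ^+ absz (z1 %% #[x])%Z) ^+ #[x] = 1 by rewrite expgAC xo expg1n.
rewrite (expgz_mod z1 o_gt0 xo) (expgz_mod z2 o_gt0 xno) -expgM.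
by apply: expgz_modn xo _; rewrite PoszM !abs_modz // modzMm.
Qed.

Lemma expgz_conj x y z : expgz x z ^ y = expgz (x ^ y) z.
Proof. by case: z => n /=; rewrite ?conjVg conjXg. Qed.

Lemma expgz1 z : expgz (1 : gT) z = 1.
Proof. by case: z => n /=; rewrite expg1n ?invg1. Qed.

Lemma expgz_mem_cycle x z : expgz x z \in <[x]>.
Proof. by case: z => n /=; rewrite ?groupV mem_cycle. Qed.

Lemma commg_expgz x y r k : x ^ y = expgz x r -> [~ y, expgz x k] = expgz x ((1 - r) * k).
Proof.
move=> def_xy; rewrite commgEr conjVg expgz_conj def_xy -expgzM -expgzN -expgzD.
by congr expgz; ring.
Qed.

End IntPowers.

Lemma conjG_norm (gT : finGroupType) (H : {group gT}) x :
  x \in 'N(H) -> (H :^ x)%G = H.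
Proof. by move/normP=> nHx; apply: group_inj. Qed.

Lemma cycle_norm (gT : finGroupType) (x y : gT) : x ^ y \in <[x]> -> y \in 'N(<[x]>).
Proof.
move=> xy_x; apply/normP/eqP.
by rewrite eqEcard cardJg leqnn andbT -cycleJ cycle_subG.
Qed.

Lemma conjG1 (gT : finGroupType) (H : {group gT}) : (H :^ 1)%G = H.
Proof. by apply: group_inj; rewrite /= conjsg1. Qed.

Lemma conjGM (gT : finGroupType) (H : {group gT}) x y :
  (H :^ (x * y)%g)%G = ((H :^ x) :^ y)%G.
Proof. by apply: group_inj; rewrite /= conjsgM. Qed.

Lemma order_morph_dvdn (gT rT : finGroupType) (G A : {group gT})
    (f : {morphism G >-> rT}) b j :
  {in A, forall x, f x = 1} -> b \in G -> b ^+ j \in A -> #[f b] %| j.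
Proof. by move=> fA Gb Abj; rewrite order_dvdn -morphX // fA. Qed.

Section ActiveSumRelation.
Variables (gT : finGroupType) (Fam : {set {group gT}}).
Local Notation R := (as_rel Fam).

Lemma as_rel_catl v w1 w2 : R w1 w2 -> R (w1 ++ v) (w2 ++ v).
Proof. by move/asr_cat; apply; apply: asr_refl. Qed.

Lemma as_rel_catr v w1 w2 : R w1 w2 -> R (v ++ w1) (v ++ w2).
Proof. exact: asr_cat (asr_refl _ v). Qed.

Lemma as_rel_cons l w1 w2 : R w1 w2 -> R (l :: w1) (l :: w2).
Proof. exact: (as_rel_catr [:: l]). Qed.

Lemma eval_word_as_rel w1 w2 : R w1 w2 -> eval_word w1 = eval_word w2.
Proof.
rewrite /eval_word; elim=> {w1 w2} //=.
- by move=> w1 w2 w3 _ -> _ ->.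
- by move=> w1 w2 v1 v2 _ e1 _ e2; rewrite !big_cat e1 e2.
- by move=> F _; rewrite big_seq1 big_nil.
- by move=> F x y *; rewrite !big_cons !big_nil !mulg1.
- by move=> F1 F2 h g *; rewrite !big_cons !big_nil !mulg1 conjgE mulgA.
Qed.

Lemma as_rel_split (F : {group gT}) x y : F \in Fam -> x \in F -> y \in F ->
  R [:: (F, x * y)] [:: (F, x); (F, y)].
Proof. by move=> *; apply/asr_sym/asr_mul. Qed.

Lemma as_rel_mulV (F : {group gT}) x : F \in Fam -> x \in F ->
  R [:: (F, x); (F, x^-1)] [::].
Proof.
move=> FF xF; apply: asr_trans (asr_mul FF xF (groupVr xF)) _.
by rewrite mulgV; apply: asr_one.
Qed.

Lemma as_rel_Vmul (F : {group gT}) x : F \in Fam -> x \in F ->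
  R [:: (F, x^-1); (F, x)] [::].
Proof. by move=> FF xF; have := as_rel_mulV FF (groupVr xF); rewrite invgK. Qed.

Lemma as_rel_consK (F : {group gT}) x w1 w2 : F \in Fam -> x \in F ->
  R ((F, x) :: w1) ((F, x) :: w2) -> R w1 w2.
Proof.
move=> FF xF /(as_rel_cons (F, x^-1)) e.
have cancel w : R ([:: (F, x^-1); (F, x)] ++ w) w := as_rel_catl w (as_rel_Vmul FF xF).
exact: asr_trans (asr_sym (cancel w1)) (asr_trans e (cancel w2)).
Qed.

Lemma as_rel_swap (A B : {group gT}) y z :
    A \in Fam -> B \in Fam -> y \in B -> y \in 'N(A) -> z \in A ->
  R [:: (B, y); (A, z)] [:: (A, z ^ y^-1); (B, y)].
Proof.
move=> FA FB yB nAy zA.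
have := asr_conj FB FA (groupVr yB) zA; rewrite invgK conjG_norm ?groupV // => e.
apply: asr_trans (as_rel_catl [:: (B, y)] e).
exact/asr_sym/(as_rel_catr [:: (B, y); (A, z)] (as_rel_Vmul FB yB)).
Qed.

End ActiveSumRelation.

Section CommutatorLetter.
Variables (gT : finGroupType) (Fam : {set {group gT}}) (A B : {group gT}) (b x0 : gT).
Hypotheses (FA : A \in Fam) (FB : B \in Fam) (Bb : b \in B) (nAb : b \in 'N(A))
  (Ax0 : x0 \in A) (nBx0 : x0 \in 'N(B)).
Local Notation R := (as_rel Fam).
Local Notation c := [~ b, x0].

Lemma commg_memA : c \in A.
Proof. by rewrite commgEr groupM ?memJ_norm ?groupV. Qed.

Lemma commg_memB : c \in B.
Proof. by rewrite commgEl groupM ?memJ_norm ?groupV. Qed.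

(* (B, b) (A, c) and (B, b) (B, c) are both equivalent to the conjugate
   (A, x0^-1) (B, b) (A, x0), as c = (x0^-1)^b x0 = b^-1 b^x0. *)
Lemma as_rel_commg : R [:: (B, c)] [:: (A, c)].
Proof.
have Ay : x0^-1 ^ b \in A by rewrite memJ_norm ?groupV.
have to_conj : R [:: (B, b); (A, c)] [:: (A, x0^-1); (B, b); (A, x0)].
  rewrite commgEr; apply: asr_trans (as_rel_cons _ (as_rel_split FA Ay Ax0)) _.
  have conj_b : R [:: (B, b^-1); (A, x0^-1); (B, b)] [:: (A, x0^-1 ^ b)].
    by have := asr_conj FB FA Bb (groupVr Ax0); rewrite conjG_norm.
  apply: asr_trans (as_rel_cons _ (as_rel_catl [:: (A, x0)] (asr_sym conj_b))) _.
  exact: (as_rel_catl _ (as_rel_mulV FB Bb)).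
have from_conj : R [:: (A, x0^-1); (B, b); (A, x0)] [:: (B, b); (B, c)].
  apply: asr_trans (asr_conj FA FB Ax0 Bb) _; rewrite conjG_norm // -[b ^ x0](mulKVg b).
  by rewrite -commgEl; apply: as_rel_split; rewrite ?commg_memB.
exact: as_rel_consK FB Bb (asr_sym (asr_trans to_conj from_conj)).
Qed.

Lemma as_rel_commgX q : R [:: (B, c ^+ q)] [:: (A, c ^+ q)].
Proof.
elim: q => [|q IHq]; first by apply: asr_trans (asr_one FB) (asr_sym (asr_one FA)).
have [cA cB] := (commg_memA, commg_memB).
rewrite expgSr; apply: asr_trans (as_rel_split FB (groupX q cB) cB) _.
exact: asr_trans (asr_cat IHq as_rel_commg) (asr_mul FA (groupX q cA) cA).
Qed.

End CommutatorLetter.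

Definition basic_letter (gT : finGroupType) (A B : {group gT}) (l : letter gT) :=
  ((l.1 == A) && (l.2 \in A)) || ((l.1 == B) && (l.2 \in B)).

Section NormalForm.
Variables (gT : finGroupType) (Fam : {set {group gT}}) (A : {group gT}).
Variables (b x0 : gT) (s : nat).
Local Notation B := <[b]>%G.
Hypotheses (FA : A \in Fam) (FB : B \in Fam) (nAb : b \in 'N(A)) (Ax0 : x0 \in A)
  (def_s : [~ b, x0] = b ^+ s) (s_gt0 : 0 < s).
Local Notation R := (as_rel Fam).

Lemma norm_cycle_commg : x0 \in 'N(B).
Proof.
by apply: cycle_norm; rewrite -[b ^ x0](mulKVg b) -commgEl def_s -expgS mem_cycle.
Qed.

Lemma memJ_cycleV y j : y \in A -> y ^ (b ^+ j)^-1 \in A.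
Proof. by move=> yA; rewrite memJ_norm // groupV groupX. Qed.

Lemma as_rel_absorb x j y : x \in A -> y \in A ->
  R [:: (A, x); (B, b ^+ j); (A, y)] [:: (A, x * y ^ (b ^+ j)^-1); (B, b ^+ j)].
Proof.
move=> xA yA; have nAbj : b ^+ j \in 'N(A) by rewrite groupX.
have := as_rel_swap FA FB (mem_cycle b j) nAbj yA.
move/(as_rel_cons (A, x))/asr_trans; apply.
exact: as_rel_catl _ (asr_mul FA xA (memJ_cycleV j yA)).
Qed.

Lemma as_rel_cycle_mod n :
  R [:: (B, b ^+ n)] [:: (B, b ^+ (n %% s)); (A, b ^+ s ^+ (n %/ s))].
Proof.
have sA : b ^+ s \in A by rewrite -def_s commg_memA.
rewrite {1}(divn_eq n s) addnC expgD mulnC expgM.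
apply: asr_trans (as_rel_split FB (mem_cycle b _) (groupX _ (mem_cycle b s))) _.
apply: (as_rel_cons _); rewrite -def_s.
exact: as_rel_commgX FA FB (cycle_id b) nAb Ax0 norm_cycle_commg _.
Qed.

Lemma as_rel_normal_form_letter x j l : x \in A -> j < s -> basic_letter A B l ->
  exists x' j', [/\ x' \in A, j' < s &
    R [:: (A, x); (B, b ^+ j); l] [:: (A, x'); (B, b ^+ j')]].
Proof.
move=> xA js; case: l => F y /orP[] /andP[/= /eqP-> yF].
  exists (x * y ^ (b ^+ j)^-1), j; split=> //; last exact: as_rel_absorb.
  by rewrite groupM ?memJ_cycleV.
have sA : b ^+ s \in A by rewrite -def_s commg_memA.
case/cycleP: yF => k ->; set n := j + k.
exists (x * (b ^+ s ^+ (n %/ s)) ^ (b ^+ (n %% s))^-1), (n %% s); split.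
- by rewrite groupM // memJ_cycleV // groupX.
- by rewrite ltn_mod.
apply: asr_trans (as_rel_cons _ (asr_mul FB (mem_cycle b j) (mem_cycle b k))) _.
rewrite -expgD -/n; apply: asr_trans (as_rel_cons _ (as_rel_cycle_mod n)) _.
exact: as_rel_absorb (groupX _ sA).
Qed.

Lemma as_rel_normal_form u : all (basic_letter A B) u ->
  exists x j, [/\ x \in A, j < s & R u [:: (A, x); (B, b ^+ j)]].
Proof.
elim/last_ind: u => [|u l IHu].
  exists 1, 0; split=> //; rewrite expg0.
  exact: asr_sym (asr_cat (asr_one FA) (asr_one FB)).
rewrite all_rcons => /andP[bl /IHu[x [j [xA js e]]]].
have [x' [j' [x'A j's e']]] := as_rel_normal_form_letter xA js bl.
exists x', j'; split=> //; rewrite -cats1.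
exact: asr_trans (as_rel_catl [:: l] e) e'.
Qed.

End NormalForm.

Definition conj_family (gT : finGroupType) (G A B : {group gT}) :=
  [set (A :^ g)%G | g in G] :|: [set (B :^ g)%G | g in G].

Section ConjugateFamily.
Variables (gT : finGroupType) (G A B : {group gT}).
Hypothesis defG : G :=: <<A :|: B>>.
Local Notation Fam := (conj_family G A B).
Local Notation R := (as_rel Fam).
Local Notation basic := (basic_letter A B).

Lemma sub_gen_family : A :|: B \subset G.
Proof. by rewrite defG sub_gen. Qed.

Lemma conj_family_sub (F : {group gT}) : F \in Fam -> F \subset G.
Proof.
have [sAG sBG] : A \subset G /\ B \subset G.
  by apply/andP; rewrite -subUset sub_gen_family.
by case/setUP=> /imsetP[g Gg ->]; rewrite /= -(conjGid Gg) conjSg.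
Qed.

Lemma conj_family_conj (F : {group gT}) x : F \in Fam -> x \in G -> (F :^ x)%G \in Fam.
Proof.
by move=> + Gx; case/setUP=> /imsetP[g Gg ->]; rewrite -conjGM; apply/setUP;
  [left | right]; apply/imsetP; exists (g * x); rewrite ?groupM.
Qed.

Lemma conj_family_id : A \in Fam /\ B \in Fam.
Proof.
by split; apply/setUP; [left | right]; apply/imsetP; exists 1; rewrite ?conjG1.
Qed.

Lemma gen_conj_family : G :=: <<\bigcup_(F in Fam) F>>.
Proof.
have [FA FB] := conj_family_id.
apply/eqP; rewrite eqEsubset gen_subG; apply/andP; split.
  by rewrite defG genS // subUset !(bigcup_sup _ FA, bigcup_sup _ FB).
by apply/bigcupsP=> F; apply: conj_family_sub.
Qed.

Definition basic_conjugator h := exists u v, [/\ all basic u, all basic v &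
  forall (F : {group gT}) g, F \in Fam -> g \in F ->
    R [:: ((F :^ h)%G, g ^ h)] (u ++ (F, g) :: v)].

Lemma basic_conjugator1 : basic_conjugator 1.
Proof.
by exists [::], [::]; split=> // F g _ _; rewrite conjG1 conjg1; apply: asr_refl.
Qed.

(* The witness for h x wraps the one for h in (X, x^-1) ... (X, x), with x in X. *)
Lemma basic_conjugatorM h x : h \in G -> x \in A :|: B ->
  basic_conjugator h -> basic_conjugator (h * x).
Proof.
move=> Gh ABx [u [v [bu bv conj_h]]].
have [FA FB] := conj_family_id.
have [X [FX Xx bX]] : exists X : {group gT}, [/\ X \in Fam, x \in X &
    forall y, y \in X -> basic (X, y)].
  by case/setUP: ABx => Xx; [exists A | exists B]; split=> // y Xy;
    rewrite /basic_letter /= eqxx Xy ?orbT.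
exists ((X, x^-1) :: u), (v ++ [:: (X, x)]); split.
- by rewrite /= bX ?groupV.
- by rewrite all_cat bv /= bX.
move=> F g FF Fg; have Fhgh : g ^ h \in (F :^ h)%G by rewrite memJ_conjg.
have := asr_conj FX (conj_family_conj FF Gh) Xx Fhgh.
rewrite -conjGM -conjgM => /asr_sym/asr_trans; apply; apply: as_rel_cons.
by have := as_rel_catl [:: (X, x)] (conj_h F g FF Fg); rewrite -catA.
Qed.

Lemma basic_conjugatorP h : h \in G -> basic_conjugator h.
Proof.
rewrite {1}defG => /gen_prodgP[n [c ABc ->]]; elim: n c ABc => [|n IHn] c ABc.
  by rewrite big_ord0; apply: basic_conjugator1.
rewrite big_ord_recr /=; apply: basic_conjugatorM => //; last exact: IHn.
by rewrite group_prod // => i _; apply: (subsetP sub_gen_family).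
Qed.

Lemma as_rel_basic_letter l : wf_letter Fam l -> exists2 u, all basic u & R [:: l] u.
Proof.
case: l => F g /andP[/= FF Fg]; have [FA FB] := conj_family_id.
have [X [h [FX Gh defF bX]]] : exists X h, [/\ X \in Fam, h \in G, F = (X :^ h)%G &
    forall y, y \in X -> basic (X, y)].
  by case/setUP: FF => /imsetP[h Gh ->]; [exists A | exists B]; exists h;
    split=> // y Xy; rewrite /basic_letter /= eqxx Xy ?orbT.
have [u [v [bu bv conj_h]]] := basic_conjugatorP Gh.
have Xg : g ^ h^-1 \in X by rewrite -(memJ_conjg _ h) conjgKV; move: Fg; rewrite defF.
exists (u ++ (X, g ^ h^-1) :: v); first by rewrite all_cat bu /= bX.
by have := conj_h X _ FX Xg; rewrite conjgKV -defF.
Qed.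

Lemma as_rel_basic_word w : all (wf_letter Fam) w -> exists2 u, all basic u & R w u.
Proof.
elim: w => [|l w IHw] /=; first by exists [::]; last apply: asr_refl.
case/andP=> /as_rel_basic_letter[u1 bu1 e1] /IHw[u2 bu2 e2].
by exists (u1 ++ u2); [rewrite all_cat bu1 | apply: asr_cat e1 e2].
Qed.

End ConjugateFamily.

Lemma mulg_cycle_inj (gT : finGroupType) (A : {group gT}) (b x1 x2 : gT) (s j1 j2 : nat) :
    (forall j, b ^+ j \in A -> s %| j) -> x1 \in A -> x2 \in A -> j1 < s -> j2 < s ->
  x1 * b ^+ j1 = x2 * b ^+ j2 -> x1 = x2 /\ j1 = j2.
Proof.
move=> sA Ax1 Ax2 j1s j2s eq_x.
have subA y1 y2 k1 k2 : y1 \in A -> y2 \in A -> y1 * b ^+ k1 = y2 * b ^+ k2 ->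
    b ^+ (k1 - k2) \in A.
  move=> Ay1 Ay2 eq_y; have [le_k21 | /ltnW] := leqP k2 k1; last first.
    by rewrite -subn_eq0 => /eqP->; rewrite group1.
  suff -> : b ^+ (k1 - k2) = y1^-1 * y2 by rewrite groupM ?groupV.
  by apply: (mulIg (b ^+ k2)); rewrite -expgD subnK // -mulgA -eq_y mulKg.
have small j k : j < s -> s %| j - k -> j <= k.
  by move=> js; rewrite /dvdn modn_small ?subn_eq0 // (leq_ltn_trans (leq_subr _ _)).
have le_j12 := small _ _ j1s (sA _ (subA _ _ _ _ Ax1 Ax2 eq_x)).
have le_j21 := small _ _ j2s (sA _ (subA _ _ _ _ Ax2 Ax1 (esym eq_x))).
have eq_j : j1 = j2 by apply/eqP; rewrite eqn_leq le_j12.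
by split=> //; move: eq_x; rewrite eq_j => /mulIg.
Qed.

Theorem active_sum_conj_family (gT : finGroupType) (G A : {group gT}) b x0 (s : nat) :
    G :=: <<A :|: <[b]> >> -> b \in 'N(A) -> x0 \in A -> [~ b, x0] = b ^+ s -> 0 < s ->
    (forall j, b ^+ j \in A -> s %| j) ->
  active_sum G (conj_family G A <[b]>%G).
Proof.
move=> defG nAb Ax0 def_s s_gt0 sA; set Fam := conj_family G A <[b]>%G.
have [FA FB] : A \in Fam /\ <[b]>%G \in Fam := conj_family_id G A <[b]>%G.
split; [exact: conj_family_sub defG | exact: gen_conj_family defG
       | exact: conj_family_conj | ].
have normal_form w : all (wf_letter Fam) w -> exists x j,
    [/\ x \in A, j < s & as_rel Fam w [:: (A, x); (<[b]>%G, b ^+ j)]].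
  case/(as_rel_basic_word defG)=> u bu e.
  have [x [j [Ax js f]]] := as_rel_normal_form FA FB nAb Ax0 def_s s_gt0 bu.
  by exists x, j; split=> //; apply: asr_trans e f.
move=> w1 w2 /normal_form[x1 [j1 [Ax1 j1s e1]]] /normal_form[x2 [j2 [Ax2 j2s e2]]].
rewrite (eval_word_as_rel e1) (eval_word_as_rel e2) /eval_word.
rewrite !big_cons !big_nil !mulg1 /=.
case/(mulg_cycle_inj sA Ax1 Ax2 j1s j2s)=> eq_x eq_j; rewrite -eq_x -eq_j in e2.
exact: asr_trans e1 (asr_sym e2).
Qed.

Theorem theorem3p5 (m s : nat) (t r : int) (gT : finGroupType)
    (G : {group gT}) (a b : gT) :
  (0 < m)%N -> (0 < s)%N ->
  ((r ^+ s)%R == 1 %[mod m])%Z ->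
  (m%:Z %| (t * (r - 1))%R)%Z ->
  G :=: <<[set a; b]>> ->
  a ^+ m = 1 -> b ^+ s = expgz a t -> a ^ b = expgz a r ->
  (forall (rT : finGroupType) (x y : rT),
      x ^+ m = 1 -> y ^+ s = expgz x t -> x ^ y = expgz x r ->
      exists f : {morphism G >-> rT}, f a = x /\ f b = y) ->
  (gcdz m%:Z (r - 1)%R %| t)%Z ->
  active_sum G ([set (<[a]> :^ g)%G | g in G] :|: [set (<[b]> :^ g)%G | g in G]).
Proof.
(* The conditions on r^s and t (r - 1) only make the presentation consistent;
   here they are subsumed by the existence of G with its universal property. *)
move=> m_gt0 s_gt0 _ _ defG am bs abr univ gcd_t.
have [Ga Gb] : a \in G /\ b \in G by rewrite defG !mem_gen ?set21 ?set22.
have defG' : G :=: <<<[a]> :|: <[b]> >>.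
  apply/eqP; rewrite eqEsubset gen_subG subUset !cycle_subG Ga Gb andbT defG genS //.
  by rewrite subUset !sub1set !inE !cycle_id ?orbT.
have nAb : b \in 'N(<[a]>) by apply: cycle_norm; rewrite abr expgz_mem_cycle.
have [k def_k] := linear_congruence_solvable gcd_t.
have def_s : [~ b, expgz a k] = b ^+ s.
  by rewrite (commg_expgz k abr) bs (expgz_eq_mod m_gt0 am def_k).
apply: (active_sum_conj_family defG' nAb (expgz_mem_cycle a k) def_s s_gt0).
have Zp1s : (Zp1 : 'I_s.-1.+1) ^+ s = expgz 1 t.
  by rewrite expgz1; apply/eqP; rewrite -order_dvdn order_Zp1 prednK.
have conj1 : 1 ^ Zp1 = expgz (1 : 'I_s.-1.+1) r by rewrite conj1g expgz1.
have [f [fa fb]] := univ _ 1 Zp1 (expg1n _ _) Zp1s conj1.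
have fA : {in <[a]>, forall x, f x = 1}.
  by move=> _ /cycleP[i ->]; rewrite morphX // fa expg1n.
by move=> j /(order_morph_dvdn fA Gb); rewrite fb order_Zp1 prednK.
Qed.
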